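(* Let $C\subset\mathbb R^3$ be a non-closed embedded curve of length $l>0$ with nowhere vanishing curvature and orientation-compatible arc-length parametrization $\mathbf c:[-l/2,l/2]\to\mathbb R^3$, and let $F\in\mathcal D_*(C)$ be a normal form with $F(s,0)=\mathbf c(s)$. Then at each point of $C$ the ruling direction of the inverse $F_*$ is linearly independent of that of $F$, i.e. $\xi_F(s)$ and $\xi_{F_*}(-s)$ are linearly independent for every $s$. In particular, $F(\Omega_\epsilon)\cap F_*(\Omega_\epsilon)=C$ for all sufficiently small $\epsilon>0$.
   Context: $-C$ is $C$ with the opposite orientation; $\kappa$ is the curvature of $\mathbf c$; $\Omega_\epsilon:=[-l/2,l/2]\times(-\epsilon,\epsilon)$. A developable strip along $C$ is the germ of a $C^\infty$ embedding $f(u,v)=f(u,0)+v\,\xi_f(u)$ with $\mathbf c_f(u)=f(u,0)$ parametrizing $C$, $\xi_f$ unit (the ruling vector field), and zero Gaussian curvature; with the Frenet frame $(\mathbf e,\mathbf n,\mathbf b)$ of $\mathbf c_f$ write $\xi_f=\cos\beta_f\,\mathbf e+\sin\beta_f(\cos\alpha_f\,\mathbf n+\sin\alpha_f\,\mathbf b)$. $\mathcal D(C)$: strips with $\mathbf c_f$ inducing the orientation of $C$ and $0<|\cos\alpha_f|<1$, normalized by $0<|\alpha_f|<\pi/2$ (first angular function), $0<\beta_f<\pi$. Geodesic curvature $\mu_f=\kappa_f\cos\alpha_f$; admissible ($\in\mathcal D_*(C)$) if $\mu_f<\min\kappa_f$ everywhere. A normal form is such a strip $F(s,v)$ defined near $[-l/2,l/2]\times\{0\}$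 with $s\mapsto F(s,0)$ an arc-length parametrization of $C$ (either orientation); it is determined by that parametrization and its first angular function, which can be any smooth function into $(-\pi/2,\pi/2)\setminus\{0\}$. Inverse: $F_*\in\mathcal D_*(-C)$ is the normal form with $F_*(s,0)=\mathbf c(-s)$ whose first angular function (w.r.t. the Frenet frame of $s\mapsto\mathbf c(-s)$) has the same sign as $\alpha_F(s)$ and satisfies $\kappa(-s)\cos\alpha_{F_*}(s)=\kappa(s)\cos\alpha_F(s)$. *)

From HB Require Import structures.
From mathcomp Require Import all_boot all_order all_algebra.
From mathcomp Require Import all_classical all_reals all_analysis.
Set Implicit Arguments. Unset Strict Implicit. Unset Printing Implicit Defensive.
Import Order.TTheory GRing.Theory Num.Theory.
Import numFieldNormedType.Exports.
Local Open Scope classical_set_scope.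
Local Open Scope ring_scope.

Section Defs.
Variable R : realType.
Notation vec := 'rV[R]_3.

Definition i0 : 'I_3 := inord 0.
Definition i1 : 'I_3 := inord 1.
Definition i2 : 'I_3 := inord 2.

Definition dot (u v : vec) : R := \sum_(i < 3) u ord0 i * v ord0 i.
Definition vnorm (u : vec) : R := Num.sqrt (dot u u).
Definition cross (u v : vec) : vec :=
  \row_(k < 3)
    (if (k : nat) == 0%N then u ord0 i1 * v ord0 i2 - u ord0 i2 * v ord0 i1
     else if (k : nat) == 1%N then u ord0 i2 * v ord0 i0 - u ord0 i0 * v ord0 i2
     else u ord0 i0 * v ord0 i1 - u ord0 i1 * v ord0 i0).

(* C^infinity on a set P (used with P open) *)
Definition smooth_on (V : normedModType R) (P : set R) (f : R -> V) :=
  forall (n : nat) (x : R), P x -> derivable (derive1n n f) x 1.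

Definition tangent (c : R -> vec) (s : R) : vec := derive1 c s.
Definition curvature (c : R -> vec) (s : R) : R := vnorm (derive1n 2 c s).
Definition principal_normal (c : R -> vec) (s : R) : vec :=
  (curvature c s)^-1 *: derive1n 2 c s.
Definition binormal (c : R -> vec) (s : R) : vec :=
  cross (tangent c s) (principal_normal c s).

Definition ruling_from (c : R -> vec) (a b : R) (s : R) : vec :=
  cos b *: tangent c s
  + sin b *: (cos a *: principal_normal c s + sin a *: binormal c s).

Definition strip (c xi : R -> vec) (u v : R) : vec := c u + v *: xi u.

Definition pu (f : R -> R -> vec) u v : vec := derive1 (fun x => f x v) u.
Definition pv (f : R -> R -> vec) u v : vec := derive1 (f u) v.
Definition gauss_curv (f : R -> R -> vec) (u v : R) : R :=
  let fu := pu f u v in let fv := pv f u v in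
  let fuu := pu (pu f) u v in let fuv := pv (pu f) u v in
  let fvv := pv (pv f) u v in
  let nu := (vnorm (cross fu fv))^-1 *: cross fu fv in
  let E := dot fu fu in let F := dot fu fv in let G := dot fv fv in
  let L := dot fuu nu in let M := dot fuv nu in let N := dot fvv nu in
  (L * N - M ^+ 2) / (E * G - F ^+ 2).

Definition Omega (l eps : R) : set (R * R) :=
  [set p | `|p.1| <= l / 2 /\ `|p.2| < eps].

(* f is (the germ of) an embedding along [-l/2,l/2] x {0}: an injective
   immersion on some Omega_eps *)
Definition embedded_germ (l : R) (f : R -> R -> vec) :=
  exists2 eps : R, 0 < eps &
    (forall p q, Omega l eps p -> Omega l eps q -> f p.1 p.2 = f q.1 q.2 -> p = q)
    /\ (forall p, Omega l eps p ->
          row_free (col_mx (pu f p.1 p.2) (pv f p.1 p.2))).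

(* Normal form: c arc-length parametrization (defined on |s| < l/2 + d),
   xi = ruling vector field with first angular function a and second angular
   function b, F(s,v) = c(s) + v xi(s) a developable (K = 0) embedded strip. *)
Definition normal_form (l d : R) (c xi : R -> vec) (a b : R -> R) :=
  [/\ smooth_on [set s | `|s| < l / 2 + d] xi,
      (forall s, `|s| < l / 2 + d ->
         [/\ 0 < `|a s| < pi / 2, 0 < b s < pi & xi s = ruling_from c (a s) (b s) s]),
      (exists2 eps : R, 0 < eps & forall s v, `|s| < l / 2 + d -> `|v| < eps ->
          gauss_curv (strip c xi) s v = 0)
    & embedded_germ l (strip c xi)].

End Defs.

From HB Require Import structures.
From mathcomp Require Import all_boot all_order all_algebra.
From mathcomp Require Import all_classical all_reals all_analysis.
From mathcomp Require Import ring lra.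
Import Order.TTheory GRing.Theory Num.Theory.
Import numFieldNormedType.Exports.
Local Open Scope classical_set_scope.
Local Open Scope ring_scope.
Set Implicit Arguments. Unset Strict Implicit. Unset Printing Implicit Defensive.

(* In the Frenet frame (e, n, b) of c, the ruling of F at c(s) is
   ξ = cos β e + sin β (cos α n + sin α b).  Reversing the orientation flips e and b
   and keeps n, so the ruling of the inverse at the same point is
   ξ' = - cos β' e + sin β' (cos α' n - sin α' b), where α', β' are the angular
   functions of the inverse evaluated at -s.  Hence [e, ξ, ξ'] = - sin β sin β' sin (α + α').
   Since α never vanishes, continuity makes its sign constant along C, and α' has the
   sign of α by definition, so α + α' lies in (0, π) or (-π, 0) and the triple product
   never vanishes.

   If c(s) + v ξ(s) = c(u) + w ξ'(u), then ξ(s) × ξ'(u) is orthogonal to c(s) - c(u),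
   and Taylor's formula gives (s - u) [e(u), ξ(s), ξ'(u)] = O((s - u)²); as the triple
   product stays away from 0 near the diagonal, s = u when |s - u| is small, and then
   v = 0 by independence.  When |s - u| is bounded below, injectivity and compactness
   bound |c(s) - c(u)| <= |v| + |w| from below, so v and w cannot both be small. *)

Section VectorAlgebra.
Variable R : realType.
Implicit Types (u v w : 'rV[R]_3) (a b : R).

Lemma ord3P (k : 'I_3) : [\/ k = i0, k = i1 | k = i2].
Proof.
by case: k => -[|[|[|//]]] ?; [apply: Or31|apply: Or32|apply: Or33];
  apply/val_inj; rewrite /= inordK.
Qed.

Lemma row3P u v :
  u ord0 i0 = v ord0 i0 -> u ord0 i1 = v ord0 i1 -> u ord0 i2 = v ord0 i2 -> u = v.
Proof. by move=> h0 h1 h2; apply/rowP => k; case: (ord3P k) => ->. Qed.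

Lemma dotE u v :
  dot u v = u ord0 i0 * v ord0 i0 + u ord0 i1 * v ord0 i1 + u ord0 i2 * v ord0 i2.
Proof.
rewrite /dot !big_ord_recl big_ord0 addr0 addrA.
by congr (_ * _ + _ * _ + _ * _); congr (_ _ _); apply/val_inj; rewrite /= inordK.
Qed.

Lemma cross_i0 u v : cross u v ord0 i0 = u ord0 i1 * v ord0 i2 - u ord0 i2 * v ord0 i1.
Proof. by rewrite mxE inordK. Qed.
Lemma cross_i1 u v : cross u v ord0 i1 = u ord0 i2 * v ord0 i0 - u ord0 i0 * v ord0 i2.
Proof. by rewrite mxE inordK. Qed.
Lemma cross_i2 u v : cross u v ord0 i2 = u ord0 i0 * v ord0 i1 - u ord0 i1 * v ord0 i0.
Proof. by rewrite mxE inordK. Qed.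

Definition crossE := (cross_i0, cross_i1, cross_i2).

Lemma dotC u v : dot u v = dot v u.
Proof. by rewrite !dotE; ring. Qed.

Lemma dot0l u : dot 0 u = 0.
Proof. by rewrite dotE !mxE; ring. Qed.

Lemma dotZr a u v : dot u (a *: v) = a * dot u v.
Proof. by rewrite !dotE !mxE; ring. Qed.

Lemma dotZl a u v : dot (a *: u) v = a * dot u v.
Proof. by rewrite dotC dotZr dotC. Qed.

Lemma dotDr u v w : dot u (v + w) = dot u v + dot u w.
Proof. by rewrite !dotE !mxE; ring. Qed.

Lemma dotBr u v w : dot u (v - w) = dot u v - dot u w.
Proof. by rewrite !dotE !mxE; ring. Qed.

Lemma dotBl u v w : dot (u - v) w = dot u w - dot v w.
Proof. by rewrite dotC dotBr !(dotC w). Qed.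

Lemma dot_ge0 u : 0 <= dot u u.
Proof. by rewrite dotE; nra. Qed.

Lemma crossNl u v : cross (- u) v = - cross u v.
Proof. by apply: row3P; rewrite !(crossE, mxE) ?crossE; ring. Qed.

Lemma crossZr a u v : cross u (a *: v) = a *: cross u v.
Proof. by apply: row3P; rewrite !(crossE, mxE) ?crossE; ring. Qed.

Lemma crossBr u v w : cross u (v - w) = cross u v - cross u w.
Proof. by apply: row3P; rewrite !(crossE, mxE) ?crossE; ring. Qed.

Lemma dot_crossC u v w : dot (cross u v) w = dot (cross v w) u.
Proof. by rewrite !dotE !crossE; ring. Qed.

Lemma dot_cross_r u v : dot (cross u v) v = 0.
Proof. by rewrite !dotE !crossE; ring. Qed.

Lemma dot_cross_l u v : dot (cross u v) u = 0.
Proof. by rewrite dot_crossC dot_cross_r. Qed.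

Definition frame_comb (e n : 'rV[R]_3) a b (g : R) := a *: e + b *: n + g *: cross e n.

Section OrthonormalFrame.
Variables e n : 'rV[R]_3.
Hypotheses (ee : dot e e = 1) (en : dot e n = 0) (nn : dot n n = 1).

Lemma dot_frame_comb a b g a' b' g' :
  dot (frame_comb e n a b g) (frame_comb e n a' b' g') = a * a' + b * b' + g * g'.
Proof.
transitivity (a * a' * dot e e + b * b' * dot n n
  + g * g' * (dot e e * dot n n - dot e n ^+ 2) + (a * b' + b * a') * dot e n).
  by rewrite /frame_comb !dotE !(crossE, mxE) ?crossE; ring.
by rewrite ee en nn; ring.
Qed.

Lemma dot_frame_comb_cross a b g :
  dot (frame_comb e n a b g) (cross e n) = g.
Proof.
transitivity (g * (dot e e * dot n n - dot e n ^+ 2)).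
  by rewrite /frame_comb !dotE !(crossE, mxE) ?crossE; ring.
by rewrite ee en nn; ring.
Qed.

Lemma triple_frame_comb a b g a' b' g' :
  dot (cross e (frame_comb e n a b g)) (frame_comb e n a' b' g') = b * g' - g * b'.
Proof.
transitivity ((b * g' - g * b') * (dot e e * dot n n - dot e n ^+ 2)).
  by rewrite /frame_comb !dotE !(crossE, mxE) ?crossE; ring.
by rewrite ee en nn; ring.
Qed.

End OrthonormalFrame.

Lemma row_free_col_mx u v w :
  u != 0 -> dot w u = 0 -> dot w v != 0 -> row_free (col_mx u v).
Proof.
move=> u0 wu wv; rewrite -kermx_eq0; apply/rowV0P => z /sub_kermxP.
rewrite -[z]hsubmxK mul_row_col (mx11_scalar (lsubmx z)) (mx11_scalar (rsubmx z)).
rewrite !mul_scalar_mx; set x := lsubmx z 0 0; set y := rsubmx z 0 0 => hz.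
have y0 : y = 0.
  have /eqP : dot w (x *: u + y *: v) = 0 by rewrite hz dotE !mxE; ring.
  rewrite dotDr !dotZr wu mulr0 add0r mulf_eq0.
  by rewrite (negbTE wv) orbF => /eqP.
have x0 : x = 0.
  by move: hz; rewrite y0 scale0r addr0 => /eqP; rewrite scaler_eq0 (negbTE u0) orbF => /eqP.
by rewrite x0 y0 -scalemx1 scale0r row_mx0.
Qed.

End VectorAlgebra.

Section MatrixNorm.
Variable R : realType.

Lemma ler_entry_mx_norm m n (A : 'M[R]_(m, n)) i j : `|A i j| <= `|A|.
Proof. by rewrite [leRHS]/Num.Def.normr /= mx_normrE; exact: (le_bigmax _ _ (i, j)). Qed.

Lemma mx_norm_le m n (A : 'M[R]_(m, n)) M :
  0 <= M -> (forall i j, `|A i j| <= M) -> `|A| <= M.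
Proof. by move=> M0 hA; rewrite [leLHS]/Num.Def.normr /= mx_normrE bigmax_le // => -[i j]. Qed.

Implicit Types (u v : 'rV[R]_3).

Lemma norm_le1_unit u : dot u u = 1 -> `|u| <= 1.
Proof.
rewrite dotE => uu; apply: mx_norm_le => // i j; rewrite (ord1 i) ler_norml.
by case: (ord3P j) => ->; apply/andP; split; nra.
Qed.

Lemma norm_dot_le u v : `|dot u v| <= 3 * (`|u| * `|v|).
Proof.
have h i : `|u ord0 i * v ord0 i| <= `|u| * `|v|.
  by rewrite normrM ler_pM ?ler_entry_mx_norm.
rewrite dotE; apply: le_trans (ler_normD _ _) _; apply: le_trans (lerD (ler_normD _ _) (lexx _)) _.
by have := h i0; have := h i1; have := h i2; lra.
Qed.

Lemma norm_cross_le u v : `|cross u v| <= 2 * (`|u| * `|v|).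
Proof.
have h i j : `|u ord0 i * v ord0 j| <= `|u| * `|v|.
  by rewrite normrM ler_pM ?ler_entry_mx_norm.
apply: mx_norm_le => [|i j]; first by rewrite !mulr_ge0.
rewrite (ord1 i); case: (ord3P j) => ->; rewrite crossE;
  apply: le_trans (ler_normB _ _) _; have := h i0 i1; have := h i0 i2;
  by have := h i1 i0; have := h i1 i2; have := h i2 i0; have := h i2 i1; lra.
Qed.

End MatrixNorm.

Section MatrixDerivative.
Variable R : realType.

(* [ring] does not see through the scaling of [R] on itself. *)
Lemma scalerRE (a b : R) : a *: b = a * b.
Proof. by []. Qed.

Lemma is_derive_entry m n (f : R -> 'M[R]_(m, n)) (t : R) (df : 'M[R]_(m, n)) i j :
  is_derive t 1 f df -> is_derive t 1 (fun x => f x i j) (df i j).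
Proof.
move=> [hd <-]; apply: DeriveDef; first by move: hd => /derivable_mxP; apply.
by rewrite derive_mx // mxE.
Qed.

Lemma is_derive_mx m n (f : R -> 'M[R]_(m, n)) (t : R) (df : 'M[R]_(m, n)) :
  (forall i j, is_derive t 1 (fun x => f x i j) (df i j)) -> is_derive t 1 f df.
Proof.
move=> hf; have hd : derivable f t 1.
  by apply/derivable_mxP => i j; apply: ex_derive; exact: hf.
apply: DeriveDef => //; rewrite derive_mx //; apply/matrixP => i j.
by rewrite mxE; apply: derive_val; exact: hf.
Qed.

Lemma is_derive_compN m n (f : R -> 'M[R]_(m, n)) (t : R) (df : 'M[R]_(m, n)) :
  is_derive (- t) 1 f df -> is_derive t 1 (fun x => f (- x)) (- df).
Proof.
move=> hf; apply: is_derive_mx => i j; rewrite mxE -mulrN1.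
exact: (is_derive1_comp (f := fun y => f y i j) (is_derive_entry i j hf) (is_deriveNid t 1)).
Qed.

Implicit Types (u v : R -> 'rV[R]_3).

Lemma is_derive_dot u v (t : R) (du dv : 'rV[R]_3) :
  is_derive t 1 u du -> is_derive t 1 v dv ->
  is_derive t 1 (fun x => dot (u x) (v x)) (dot (u t) dv + dot du (v t)).
Proof.
move=> hu hv; have hM i := is_deriveM (is_derive_entry ord0 i hu) (is_derive_entry ord0 i hv).
have /is_derive_eq := is_deriveD (is_deriveD (hM i0) (hM i1)) (hM i2).
rewrite (_ : _ + _ = fun x => dot (u x) (v x)); last by apply/funext => x; rewrite dotE.
by apply; rewrite !dotE /= !scalerRE; ring.
Qed.

Lemma is_derive_cross u v (t : R) (du dv : 'rV[R]_3) :
  is_derive t 1 u du -> is_derive t 1 v dv ->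
  is_derive t 1 (fun x => cross (u x) (v x)) (cross (u t) dv + cross du (v t)).
Proof.
move=> hu hv; apply: is_derive_mx => i j; rewrite (ord1 i).
have hM k l := is_deriveM (is_derive_entry ord0 k hu) (is_derive_entry ord0 l hv).
have minor j' k l k' l' :
    (forall x, cross (u x) (v x) ord0 j' = u x ord0 k * v x ord0 l - u x ord0 k' * v x ord0 l') ->
    is_derive t 1 (fun x => cross (u x) (v x) ord0 j')
      (u t ord0 k * dv ord0 l + v t ord0 l * du ord0 k
       - (u t ord0 k' * dv ord0 l' + v t ord0 l' * du ord0 k')).
  move=> hj; have /is_derive_eq := is_deriveB (hM k l) (hM k' l').
  rewrite (_ : _ - _ = fun x => cross (u x) (v x) ord0 j'); last by apply/funext => x; rewrite hj.
  by apply; rewrite !scalerRE.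
case: (ord3P j) => ->;
  [ apply: is_derive_eq (minor i0 i1 i2 i2 i1 _) _
  | apply: is_derive_eq (minor i1 i2 i0 i0 i2 _) _
  | apply: is_derive_eq (minor i2 i0 i1 i1 i0 _) _ ];
  by [move=> x; rewrite crossE | rewrite !(crossE, mxE) ?crossE; ring].
Qed.

End MatrixDerivative.

Section MeanValueBounds.
Variable R : realType.
Implicit Types (a b M K : R) (i : interval R).

Lemma ler_norm_MVT i (f df : R -> R) M a b :
  {in i, forall x : R, is_derive x 1 f (df x)} -> {in i, forall x, `|df x| <= M} ->
  a \in i -> b \in i -> `|f b - f a| <= M * `|b - a|.
Proof.
move=> hf hM; wlog ab : a b / a <= b => [H ai bi|ai bi].
  have [/H |/ltW /H H'] := leP a b; first exact.
  by rewrite distrC [`|b - a|]distrC H'.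
have sub : {subset `[a, b] <= i}.
  by move=> x; rewrite in_itv /= => xab; exact: (interval_is_interval ai bi xab).
have [c /sub ci ->] : exists2 c, c \in `[a, b] & f b - f a = df c * (b - a).
  apply: MVT_segment => // [x xab|]; first by apply: hf; apply: sub; exact: subset_itv_oo_cc.
  by apply: derivable_within_continuous => x /sub /hf hx; exact: ex_derive.
by rewrite normrM ler_wpM2r // hM.
Qed.

Lemma ler_norm_MVT_mx i m n (f df : R -> 'M[R]_(m, n)) M a b :
  {in i, forall x : R, is_derive x 1 f (df x)} -> {in i, forall x, `|df x| <= M} ->
  a \in i -> b \in i -> `|f b - f a| <= M * `|b - a|.
Proof.
move=> hf hM ai bi; apply: mx_norm_le => [|k l].
  by rewrite mulr_ge0 // (le_trans _ (hM a ai)).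
rewrite !mxE; apply: (@ler_norm_MVT i (fun x => f x k l) (fun x => df x k l) M) => // x xi.
  exact: is_derive_entry (hf x xi).
exact: le_trans (ler_entry_mx_norm _ _ _) (hM x xi).
Qed.

Lemma itv_min_max_distr a b x :
  x \in `[Num.min a b, Num.max a b] -> `|x - a| <= `|b - a|.
Proof.
rewrite in_itv /= ge_min le_max => /andP[h1 h2].
have := ler_norm (b - a); have := ler_norm (a - b); rewrite distrC ler_norml.
by case/orP: h1 => ?; case/orP: h2 => ?; lra.
Qed.

Lemma ler_norm_Taylor1 i (f df ddf : R -> R) K a b :
  {in i, forall x : R, is_derive x 1 f (df x)} -> {in i, forall x : R, is_derive x 1 df (ddf x)} ->
  {in i, forall x, `|ddf x| <= K} -> a \in i -> b \in i ->
  `|f b - f a - (b - a) * df a| <= K * (b - a) ^+ 2.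
Proof.
move=> hf hdf hK ai bi.
set j := `[Num.min a b, Num.max a b].
have sub : {subset j <= i}.
  move=> x; rewrite in_itv /= => xab; apply: (interval_is_interval _ _ xab).
    by case: (leP a b) => _.
  by case: (leP a b) => _.
have aj : a \in j by rewrite in_itv /= ge_min le_max lexx.
have bj : b \in j by rewrite in_itv /= ge_min le_max lexx !orbT.
have hg x : x \in j -> is_derive x 1 (fun y => f y - y * df a) (df x - df a).
  move=> /sub xi; apply: is_derive_eq.
  - exact: is_deriveB (hf x xi) (is_deriveM (is_derive_id x 1) (is_derive_cst (df a) x 1)).
  - by rewrite /= !scalerRE; ring.
have hg' x : x \in j -> `|df x - df a| <= K * `|b - a|.
  move=> xj; apply: le_trans (ler_norm_MVT hdf hK ai (sub x xj)) _.
  apply: ler_wpM2l; last exact: itv_min_max_distr.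
  exact: le_trans (normr_ge0 _) (hK a ai).
have -> : f b - f a - (b - a) * df a = (f b - b * df a) - (f a - a * df a) by ring.
by rewrite -real_normK ?num_real // expr2 mulrA (ler_norm_MVT hg hg' aj bj).
Qed.

Lemma ler_norm_Taylor1_mx (i : interval R) m n (f df ddf : R -> 'M[R]_(m, n)) K a b :
  {in i, forall x : R, is_derive x 1 f (df x)} -> {in i, forall x : R, is_derive x 1 df (ddf x)} ->
  {in i, forall x, `|ddf x| <= K} -> a \in i -> b \in i ->
  `|f b - f a - (b - a) *: df a| <= K * (b - a) ^+ 2.
Proof.
move=> hf hdf hK ai bi; apply: mx_norm_le => [|k l].
  by rewrite mulr_ge0 ?sqr_ge0 // (le_trans _ (hK a ai)).
rewrite !mxE; apply: (@ler_norm_Taylor1 i (fun x => f x k l) (fun x => df x k l)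
  (fun x => ddf x k l)) => // x xi; first exact: is_derive_entry (hf x xi).
  exact: is_derive_entry (hdf x xi).
exact: le_trans (ler_entry_mx_norm _ _ _) (hK x xi).
Qed.

End MeanValueBounds.

Section Compactness.
Variable R : realType.
Implicit Types (a b : R).

Lemma in_segment_norm (L x : R) : (x \in `[- L, L]) = (`|x| <= L).
Proof. by rewrite in_itv /= ler_norml. Qed.

Lemma bounded_segment (V : normedModType R) (f : R -> V) a b :
  {within `[a, b], continuous f} ->
  exists2 M, 0 <= M & forall x, x \in `[a, b] -> `|f x| <= M.
Proof.
move=> hf; have [M [_ HM]] := compact_bounded (continuous_compact hf (@segment_compact _ a b)).
exists (Num.max 0 (M + 1)) => [|x xab]; first by rewrite le_max lexx.
rewrite le_max; apply/orP; right; apply: (HM (M + 1)); first by rewrite ltrDl.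
by exists x => //; rewrite inE.
Qed.

Lemma bounded_away_from0_segment (g : R -> R) a b : a <= b ->
  {within `[a, b], continuous g} -> (forall x, x \in `[a, b] -> g x != 0) ->
  exists2 m, 0 < m & forall x, x \in `[a, b] -> m <= `|g x|.
Proof.
move=> ab hg g0.
have [|c cab hc] := EVT_min ab (f := fun x => `|g x|).
  by move=> x; apply: continuous_comp; [exact: hg | exact: norm_continuous].
by exists `|g c| => //; rewrite normr_gt0 g0.
Qed.

Lemma sign_constant_segment (g : R -> R) a b :
  {within `[a, b], continuous g} -> (forall x, x \in `[a, b] -> g x != 0) ->
  {in `[a, b] &, forall x y, (0 < g x) = (0 < g y)}.
Proof.
move=> hg g0; suff sgn x : x \in `[a, b] -> (0 < g x) = (0 < g a).
  by move=> x y xab yab; rewrite sgn // sgn.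
move=> xab; have ax : a <= x by move: xab; rewrite in_itv /= => /andP[].
have sub : `[a, x] `<=` `[a, b].
  by apply: subset_itvl; move: xab; rewrite in_itv /= bnd_simp => /andP[].
have hg' := continuous_subspaceW sub hg.
have ga_g0 y : y \in `[a, x] -> g y != 0 by move=> /sub; exact: g0.
case: (ltP 0 (g x)) => gx; case: (ltP 0 (g a)) => ga //.
all: suff [c cax gc0] : exists2 c, c \in `[a, x] & g c = 0
  by have := ga_g0 c cax; rewrite gc0 eqxx.
all: apply: IVT => //; rewrite ge_min le_max.
- by rewrite ga (ltW gx) orbT.
- by rewrite gx (ltW ga) orbT.
Qed.

Lemma injective_separated (V : normedModType R) (f : R -> V) a b (delta : R) :
  0 < delta -> (forall x, x \in `[a, b] -> {for x, continuous f}) ->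
  {in `[a, b] &, injective f} ->
  exists2 rho, 0 < rho & forall x y, x \in `[a, b] -> y \in `[a, b] ->
    delta <= `|x - y| -> rho <= `|f x - f y|.
Proof.
move=> d0 hf finj.
set A := (`[a, b] `*` `[a, b]) `&` [set p : R * R | delta <= `|p.1 - p.2|].
have hA : compact A.
  apply: compact_closedI; first by apply: compact_setX; exact: segment_compact.
  apply: (@closed_comp _ _ _ [set x | delta <= x]); last exact: closed_ge.
  by move=> p _; apply: cvg_norm; apply: cvgB; [exact: cvg_fst | exact: cvg_snd].
have hcont : {within A, continuous (fun p : R * R => `|f p.1 - f p.2|)}.
  apply: continuous_in_subspaceT => p; rewrite inE => -[[/= p1 p2] _].
  apply: cvg_norm; apply: cvgB; apply: continuous_comp;
    [exact: cvg_fst | exact: hf | exact: cvg_snd | exact: hf].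
have [[p0 Ap0]|A0] := pselect (A !=set0); last first.
  by exists 1 => // x y xab yab dxy; exfalso; apply: A0; exists (x, y).
have [p Ap pmin] := compact_EVT_min (ex_intro _ p0 Ap0) hA hcont.
move: Ap; rewrite inE => -[[/= p1 p2] dp].
exists `|f p.1 - f p.2| => [|x y xab yab dxy]; last by apply: (pmin (x, y)); rewrite inE.
rewrite normr_gt0 subr_eq0; apply: contraTneq dp => /finj -> //.
by rewrite subrr normr0 -ltNge.
Qed.

End Compactness.

Section ArcLengthCurve.
Variables (R : realType) (r : R) (c : R -> 'rV[R]_3).
Hypothesis c_smooth : smooth_on [set s | `|s| < r] c.
Hypothesis c_unit : forall s, `|s| < r -> dot (tangent c s) (tangent c s) = 1.
Hypothesis c_curv : forall s, `|s| < r -> 0 < curvature c s.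

Implicit Types (s : R).

Local Notation e := (tangent c).
Local Notation k := (derive1n 2 c).

Lemma is_derive_curve s : `|s| < r -> is_derive s 1 c (e s).
Proof. by move=> /(c_smooth (n := 0)) hc; rewrite /tangent derive1E; exact: derivableP. Qed.

Lemma curve_continuous s : `|s| < r -> {for s, continuous c}.
Proof.
by move=> /(c_smooth (n := 0)) hc; apply: differentiable_continuous; exact/derivable1_diffP.
Qed.

Lemma is_derive_tangent s : `|s| < r -> is_derive s 1 e (k s).
Proof. by move=> /(c_smooth (n := 1)) hc; rewrite /= derive1E; exact: derivableP. Qed.

Lemma derivable_curvature_vector s : `|s| < r -> derivable k s 1.
Proof. exact: (c_smooth (n := 2)). Qed.

Lemma near_domain s : `|s| < r -> \forall x \near s, `|x| < r.
Proof.
move=> sr; apply/nbhs_ballP; exists (r - `|s|) => /=; first by rewrite subr_gt0.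
move=> x; rewrite /ball /= => sx.
by have := ler_normB s (s - x); rewrite opprB addrC subrK; lra.
Qed.

Lemma dot_tangent_curvature_vector s : `|s| < r -> dot (e s) (k s) = 0.
Proof.
move=> sr; have [_] := is_derive_dot (is_derive_tangent sr) (is_derive_tangent sr).
have -> : 'D_1 (fun x => dot (e x) (e x)) s = 'D_1 (cst (1 : R)) s.
  by apply: near_eq_derive; near=> x; apply: c_unit; near: x; exact: near_domain.
rewrite derive_cst [dot (k s) _]dotC => /eqP; rewrite eq_sym -mulr2n mulrn_eq0 /=.
by move=> /eqP.
Unshelve. all: by end_near.
Qed.

Lemma curvature_vectorE s : `|s| < r -> k s = curvature c s *: principal_normal c s.
Proof. by move=> sr; rewrite /principal_normal scalerA divff ?scale1r // gt_eqF ?c_curv. Qed.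

Lemma dot_tangent_normal s : `|s| < r -> dot (e s) (principal_normal c s) = 0.
Proof. by move=> sr; rewrite /principal_normal dotZr dot_tangent_curvature_vector ?mulr0. Qed.

Lemma dot_normal_normal s : `|s| < r -> dot (principal_normal c s) (principal_normal c s) = 1.
Proof.
move=> sr; have kk : dot (k s) (k s) = curvature c s ^+ 2 by rewrite sqr_sqrtr ?dot_ge0.
rewrite /principal_normal dotZl dotZr kk mulrA -expr2 -exprMn mulVf ?expr1n //.
by rewrite gt_eqF ?c_curv.
Qed.

Local Notation cN := (fun s => c (- s)).

Lemma tangent_reversed s : `|s| < r -> tangent cN (- s) = - e s.
Proof.
move=> sr; rewrite /tangent derive1E; apply: derive_val.
by apply: is_derive_compN; rewrite opprK; exact: is_derive_curve.
Qed.

Lemma curvature_vector_reversed s : `|s| < r -> derive1n 2 cN (- s) = k s.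
Proof.
move=> sr; change (derive1 (derive1 cN) (- s) = k s); rewrite derive1E.
rewrite (@near_eq_derive _ _ _ _ (- (fun x => e (- x)))); last first.
  near=> x; have := @tangent_reversed (- x); rewrite opprK /tangent => -> //.
  by rewrite normrN; near: x; apply: near_domain; rewrite normrN.
have h : is_derive (- s) 1 (- (fun x => e (- x))) (k s).
  rewrite -[k s]opprK; apply: is_deriveN; apply: is_derive_compN.
  by rewrite opprK; exact: is_derive_tangent.
exact: (@derive_val _ _ _ _ _ _ _ h).
Unshelve. all: by end_near.
Qed.

Lemma curvature_reversed s : `|s| < r -> curvature cN (- s) = curvature c s.
Proof. by move=> sr; rewrite /curvature (curvature_vector_reversed sr). Qed.

Lemma principal_normal_reversed s : `|s| < r ->
  principal_normal cN (- s) = principal_normal c s.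
Proof.
by move=> sr; rewrite /principal_normal (curvature_reversed sr) (curvature_vector_reversed sr).
Qed.

Lemma binormal_reversed s : `|s| < r -> binormal cN (- s) = - binormal c s.
Proof.
by move=> sr; rewrite /binormal (tangent_reversed sr) (principal_normal_reversed sr) crossNl.
Qed.

Lemma curve_Taylor_bound L : L < r -> exists2 K, 0 <= K &
  forall s u, `|s| <= L -> `|u| <= L -> `|c s - c u - (s - u) *: e u| <= K * (s - u) ^+ 2.
Proof.
move=> Lr; have inr x : x \in `[- L, L] -> `|x| < r.
  by rewrite in_segment_norm => /le_lt_trans; apply.
have [K K0 hK] : exists2 K, 0 <= K & forall x, x \in `[- L, L] -> `|k x| <= K.
  apply: bounded_segment; apply: derivable_within_continuous => x /inr.
  exact: derivable_curvature_vector.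
exists K => // s u; rewrite -!in_segment_norm => sL uL.
have := @ler_norm_Taylor1_mx _ `[- L, L] 1 3 c e k K u s.
by move=> /(_ _ _ hK uL sL); apply=> x /inr xr;
  [exact: is_derive_curve xr | exact: is_derive_tangent xr].
Qed.

End ArcLengthCurve.

Section Trigonometry.
Variable R : realType.
Implicit Types (a b : R).

Lemma sin_gt0_pihalfE a : `|a| < pi / 2 -> (0 < sin a) = (0 < a).
Proof.
rewrite ltr_norml => /andP[a1 a2]; have [a0|a0] := ltP 0 a.
  by rewrite sin_gt0_pihalf // a0.
apply/negbTE; rewrite -leNgt -oppr_ge0 -sinN; have [->|an] := eqVneq a 0.
  by rewrite oppr0 sin0.
by apply/ltW/sin_gt0_pihalf; rewrite oppr_gt0 lt_neqAle an a0 ltrNl.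
Qed.

Lemma sin_neq0_pihalf a : 0 < `|a| < pi / 2 -> sin a != 0.
Proof.
move=> /andP[a0 aL]; have [ap|an] := ltP 0 a; first by rewrite gt_eqF // sin_gt0_pihalfE.
rewrite -oppr_eq0 -sinN gt_eqF // sin_gt0_pihalfE ?normrN // oppr_gt0 lt_neqAle an andbT.
by apply: contraTneq a0 => ->; rewrite normr0 ltxx.
Qed.

Lemma sinD_neq0 a b : 0 < `|a| < pi / 2 -> 0 < `|b| < pi / 2 ->
  (0 < a) = (0 < b) -> sin (a + b) != 0.
Proof.
move=> /andP[a0 aL] /andP[b0 bL] ab; move: aL bL; rewrite !ltr_norml.
move=> /andP[a1 a2] /andP[b1 b2]; have pi2 : pi / 2 + pi / 2 = pi :> R by rewrite -splitr.
have [ap|an] := ltP 0 a.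
  have bp : 0 < b by rewrite -ab.
  by rewrite gt_eqF // sin_gt0_pi //; apply/andP; split; lra.
have an' : a < 0.
  by rewrite lt_neqAle an andbT; apply: contraTneq a0 => ->; rewrite normr0 ltxx.
have bn : b < 0.
  have : ~~ (0 < b) by rewrite -ab -leNgt.
  rewrite -leNgt le_eqVlt => /orP[/eqP b0'|//].
  by move: b0; rewrite b0' normr0 ltxx.
by rewrite -oppr_eq0 -sinN gt_eqF // sin_gt0_pi //; apply/andP; split; lra.
Qed.

Lemma sqr_spherical a b :
  cos b ^+ 2 + (sin b * cos a) ^+ 2 + (sin b * sin a) ^+ 2 = 1.
Proof. by rewrite !exprMn -addrA -mulrDr cos2Dsin2 mulr1 cos2Dsin2. Qed.

End Trigonometry.

Lemma normal_form_angles (R : realType) (l d : R) (c xi : R -> 'rV[R]_3)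
    (al be : R -> R) (s : R) :
  normal_form l d c xi al be -> `|s| < l / 2 + d ->
  0 < `|al s| < pi / 2 /\ 0 < sin (be s).
Proof. by case=> _ angles _ _ /angles [? ? _]; split => //; apply: sin_gt0_pi. Qed.

Lemma is_derive_normal_form_ruling (R : realType) (l d : R) (c xi : R -> 'rV[R]_3)
    (al be : R -> R) (s : R) :
  normal_form l d c xi al be -> `|s| < l / 2 + d -> is_derive s 1 xi (derive1 xi s).
Proof.
by case=> xi_smooth _ _ _ sr; rewrite derive1E; apply: derivableP; exact: xi_smooth 0%N s sr.
Qed.

Lemma addr_eq_subr (V : zmodType) (x y a b : V) : x + a = y + b -> x - y = b - a.
Proof. by move=> h; apply/eqP; rewrite subr_eq addrAC [b + y]addrC -h addrK. Qed.

Section NormalFormPair.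
Variables (R : realType) (l d : R) (c xi xis : R -> 'rV[R]_3) (al be als bes : R -> R).
Hypothesis l_gt0 : 0 < l.
Hypothesis d_gt0 : 0 < d.
Hypothesis c_smooth : smooth_on [set s | `|s| < l / 2 + d] c.
Hypothesis c_unit : forall s, `|s| < l / 2 + d -> dot (tangent c s) (tangent c s) = 1.
Hypothesis c_curv : forall s, `|s| < l / 2 + d -> 0 < curvature c s.
Hypothesis F_normal : normal_form l d c xi al be.
Hypothesis Fs_normal : normal_form l d (fun s => c (- s)) xis als bes.
Hypothesis als_sign : forall s, `|s| < l / 2 + d -> (0 < als s) = (0 < al s).
Hypothesis c_inj : forall s t, `|s| <= l / 2 -> `|t| <= l / 2 -> c s = c t -> s = t.

Implicit Types (s u : R).
Local Notation r := (l / 2 + d).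
Local Notation e := (tangent c).
Local Notation n := (principal_normal c).
Local Notation k := (derive1n 2 c).

Lemma half_length_lt : l / 2 < r.
Proof. by rewrite ltrDl. Qed.

Lemma inner_domain s : `|s| <= l / 2 -> `|s| < r.
Proof. by move=> /le_lt_trans; apply; exact: half_length_lt. Qed.

Lemma segment_in_domain s : s \in `[- (l / 2), l / 2] -> `|s| < r.
Proof. by rewrite in_segment_norm => /inner_domain. Qed.

Lemma frame_orthonormal s : `|s| < r ->
  [/\ dot (e s) (e s) = 1, dot (e s) (n s) = 0 & dot (n s) (n s) = 1].
Proof.
move=> sr; split; first exact: c_unit.
  exact: (dot_tangent_normal c_smooth c_unit sr).
exact: (dot_normal_normal c_curv sr).
Qed.

Lemma ruling_frame s : `|s| < r -> xi s = frame_comb (e s) (n s)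
  (cos (be s)) (sin (be s) * cos (al s)) (sin (be s) * sin (al s)).
Proof.
case: F_normal => _ angles _ _ sr; have [_ _ ->] := angles s sr.
by rewrite /ruling_from /frame_comb /binormal scalerDr !scalerA addrA.
Qed.

Lemma inverse_ruling_frame s : `|s| < r -> xis (- s) = frame_comb (e s) (n s)
  (- cos (bes (- s))) (sin (bes (- s)) * cos (als (- s))) (- (sin (bes (- s)) * sin (als (- s)))).
Proof.
case: Fs_normal => _ angles _ _ sr; have sNr : `|- s| < r by rewrite normrN.
have [_ _ ->] := angles (- s) sNr.
rewrite /ruling_from (tangent_reversed c_smooth sr) (principal_normal_reversed c_smooth sr).
rewrite (binormal_reversed c_smooth sr) /binormal /frame_comb scalerDr !scalerA.
by rewrite scalerN scaleNr scalerN scaleNr addrA.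
Qed.

Lemma ruling_unit s : `|s| < r -> dot (xi s) (xi s) = 1.
Proof.
move=> sr; have [ee en nn] := frame_orthonormal sr.
by rewrite ruling_frame // dot_frame_comb // -!expr2 sqr_spherical.
Qed.

Lemma inverse_ruling_unit s : `|s| < r -> dot (xis (- s)) (xis (- s)) = 1.
Proof.
move=> sr; have [ee en nn] := frame_orthonormal sr.
by rewrite inverse_ruling_frame // dot_frame_comb // -!expr2 !sqrrN sqr_spherical.
Qed.

Lemma ruling_triple_formula s : `|s| < r ->
  dot (cross (e s) (xi s)) (xis (- s))
  = - (sin (be s) * sin (bes (- s))) * sin (al s + als (- s)).
Proof.
move=> sr; have [ee en nn] := frame_orthonormal sr.
by rewrite ruling_frame // inverse_ruling_frame // triple_frame_comb // sinD; ring.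
Qed.

Lemma first_angle_sign s t : `|s| <= l / 2 -> `|t| <= l / 2 -> (0 < al s) = (0 < al t).
Proof.
(* G = κ sin β sin α has the sign of α and, unlike α, is visibly continuous. *)
pose G x := dot (xi x) (cross (e x) (k x)).
have G_sign x : `|x| < r -> (0 < G x) = (0 < al x) /\ G x != 0.
  move=> xr; have [a_bd b_pos] := normal_form_angles F_normal xr.
  have [ee en nn] := frame_orthonormal xr; have kap := c_curv xr.
  have -> : G x = curvature c x * (sin (be x) * sin (al x)).
    by rewrite /G (curvature_vectorE c_curv xr) crossZr dotZr ruling_frame // dot_frame_comb_cross.
  rewrite !pmulr_rgt0 // sin_gt0_pihalfE; last by case/andP: a_bd.
  split => //; apply: mulf_neq0; first exact: lt0r_neq0.
  by apply: mulf_neq0; [exact: lt0r_neq0 | exact: sin_neq0_pihalf].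
have G_cont : {within `[- (l / 2), l / 2], continuous G}.
  apply: derivable_within_continuous => x /segment_in_domain xr.
  have hk : is_derive x 1 k (derive1 k x).
    by move: (derivable_curvature_vector c_smooth xr) => /derivableP; rewrite derive1E.
  by case: (is_derive_dot (is_derive_normal_form_ruling F_normal xr)
    (is_derive_cross (is_derive_tangent c_smooth xr) hk)).
rewrite -!in_segment_norm => sL tL.
rewrite -(G_sign s (segment_in_domain sL)).1 -(G_sign t (segment_in_domain tL)).1.
by apply: (sign_constant_segment G_cont) => // x /segment_in_domain xr; exact: (G_sign x xr).2.
Qed.

Lemma ruling_triple_neq0 u : `|u| <= l / 2 -> dot (cross (e u) (xi u)) (xis (- u)) != 0.
Proof.
move=> uL; have ur := inner_domain uL; have uNr : `|- u| < r by rewrite normrN.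
have [a_bd b_pos] := normal_form_angles F_normal ur.
have [as_bd bs_pos] := normal_form_angles Fs_normal uNr.
rewrite ruling_triple_formula //; apply: mulf_neq0.
  by rewrite oppr_eq0; apply: mulf_neq0; exact: lt0r_neq0.
apply: sinD_neq0 => //; rewrite als_sign //.
by apply: first_angle_sign; rewrite ?normrN.
Qed.

Lemma rulings_row_free s : `|s| <= l / 2 -> row_free (col_mx (xi s) (xis (- s))).
Proof.
move=> sL; apply: (@row_free_col_mx _ _ _ (cross (e s) (xi s))).
- apply/eqP => xi0; move: (ruling_unit (inner_domain sL)).
  by rewrite xi0 dot0l => /eqP; rewrite eq_sym oner_eq0.
- exact: dot_cross_r.
- exact: ruling_triple_neq0.
Qed.

Lemma ruling_triple_bounded_below : exists2 k0, 0 < k0 &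
  forall u, `|u| <= l / 2 -> k0 <= `|dot (cross (e u) (xi u)) (xis (- u))|.
Proof.
have L0 : - (l / 2) <= l / 2 by rewrite -subr_ge0 opprK -splitr ltW.
have cont : {within `[- (l / 2), l / 2],
    continuous (fun u => dot (cross (e u) (xi u)) (xis (- u)))}.
  apply: derivable_within_continuous => x /segment_in_domain xr.
  have xNr : `|- x| < r by rewrite normrN.
  by case: (is_derive_dot (is_derive_cross (is_derive_tangent c_smooth xr)
    (is_derive_normal_form_ruling F_normal xr))
    (is_derive_compN (is_derive_normal_form_ruling Fs_normal xNr))).
have nz x : x \in `[- (l / 2), l / 2] -> dot (cross (e x) (xi x)) (xis (- x)) != 0.
  by rewrite in_segment_norm => /ruling_triple_neq0.
have [k0 k0p hk0] := bounded_away_from0_segment L0 cont nz.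
by exists k0 => // u; rewrite -in_segment_norm => /hk0.
Qed.

Lemma ruling_lipschitz : exists2 K, 0 <= K &
  forall s u, `|s| <= l / 2 -> `|u| <= l / 2 -> `|xi s - xi u| <= K * `|s - u|.
Proof.
case: F_normal => xi_smooth _ _ _.
have [K K0 hK] : exists2 K, 0 <= K &
    forall x, x \in `[- (l / 2), l / 2] -> `|derive1 xi x| <= K.
  apply: bounded_segment; apply: derivable_within_continuous => x /segment_in_domain.
  exact: xi_smooth 1%N x.
exists K => // s u; rewrite -!in_segment_norm => sL uL.
have := @ler_norm_MVT_mx _ `[- (l / 2), l / 2] 1 3 xi (derive1 xi) K u s.
move=> /(_ _ hK uL sL); apply=> x /segment_in_domain.
exact: is_derive_normal_form_ruling F_normal.
Qed.

Lemma secant_triple_bound : exists2 K, 0 <= K & forall s u v w,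
  `|s| <= l / 2 -> `|u| <= l / 2 -> c s + v *: xi s = c u + w *: xis (- u) ->
  `|s - u| * `|dot (cross (e u) (xi s)) (xis (- u))| <= K * (s - u) ^+ 2.
Proof.
have [K K0 hK] := curve_Taylor_bound c_smooth half_length_lt.
exists (6 * K) => [|s u v w sL uL meet]; first by rewrite mulr_ge0.
have [sr ur] := (inner_domain sL, inner_domain uL).
have m_chord : dot (cross (xi s) (xis (- u))) (c s - c u) = 0.
  by rewrite (addr_eq_subr meet) dotBr !dotZr dot_cross_r dot_cross_l !mulr0 subr0.
have m_tangent : dot (cross (xi s) (xis (- u))) (e u) = dot (cross (e u) (xi s)) (xis (- u)).
  by rewrite [RHS]dot_crossC.
have key : (s - u) * dot (cross (e u) (xi s)) (xis (- u))
    = - dot (cross (xi s) (xis (- u))) (c s - c u - (s - u) *: e u).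
  by rewrite dotBr m_chord dotZr m_tangent sub0r opprK.
rewrite -normrM key normrN; apply: le_trans (norm_dot_le _ _) _.
have m_le2 : `|cross (xi s) (xis (- u))| <= 2.
  apply: le_trans (norm_cross_le _ _) _; rewrite -[leRHS]mulr1 ler_pM2l //.
  by rewrite mulr_ile1 ?norm_le1_unit ?ruling_unit ?inverse_ruling_unit.
have := ler_wpM2r (normr_ge0 (c s - c u - (s - u) *: e u)) m_le2.
by have := hK s u sL uL; lra.
Qed.

Lemma triple_lipschitz : exists2 K, 0 <= K & forall s u,
  `|s| <= l / 2 -> `|u| <= l / 2 ->
  `|dot (cross (e u) (xi s)) (xis (- u)) - dot (cross (e u) (xi u)) (xis (- u))|
    <= K * `|s - u|.
Proof.
have [K K0 hK] := ruling_lipschitz.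
exists (6 * K) => [|s u sL uL]; first by rewrite mulr_ge0.
have ur := inner_domain uL.
rewrite -dotBl -crossBr; apply: le_trans (norm_dot_le _ _) _.
have cross_le : `|cross (e u) (xi s - xi u)| <= 2 * (K * `|s - u|).
  apply: le_trans (norm_cross_le _ _) _; rewrite ler_pM2l // -[leRHS]mul1r.
  by rewrite ler_pM ?norm_le1_unit ?c_unit ?hK.
have X_le1 := norm_le1_unit (inverse_ruling_unit ur).
have := ler_pM (normr_ge0 _) (normr_ge0 _) cross_le X_le1; lra.
Qed.

Lemma rulings_meet_near_diagonal : exists2 delta, 0 < delta & forall s u v w,
  `|s| <= l / 2 -> `|u| <= l / 2 -> `|s - u| < delta ->
  c s + v *: xi s = c u + w *: xis (- u) -> s = u.
Proof.
have [K1 K10 h1] := secant_triple_bound.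
have [K2 K20 h2] := triple_lipschitz.
have [k0 k0p h0] := ruling_triple_bounded_below.
exists (k0 / (K1 + K2 + 1)) => [|s u v w sL uL]; first by rewrite divr_gt0 //; lra.
rewrite ltr_pdivlMr; last lra.
move=> small meet; apply/eqP; rewrite -subr_eq0 -normr_eq0 eq_le normr_ge0 andbT leNgt.
have := h1 s u v w sL uL meet; rewrite -real_normK ?num_real //.
move: small (h0 u uL) (h2 s u sL uL).
set t := `|s - u|; set g := dot (cross (e u) (xi s)) _; set D := dot _ _.
move=> small D_lb g_near t_g; apply/negP => t_gt0.
have g_lb : k0 - K2 * t <= `|g|.
  by have := ler_normB g (g - D); rewrite opprB addrC subrK; lra.
have : t * (k0 - K2 * t) <= t * (K1 * t).
  by apply: le_trans (ler_wpM2l (ltW t_gt0) g_lb) _; rewrite mulrCA -expr2.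
by rewrite ler_pM2l // => ?; nra.
Qed.

Lemma rulings_independent u v w : `|u| <= l / 2 -> v *: xi u = w *: xis (- u) -> v = 0.
Proof.
move=> uL h.
have w0 : w = 0.
  have /eqP := congr1 (dot (cross (e u) (xi u))) h.
  rewrite !dotZr dot_cross_r mulr0 eq_sym mulf_eq0 (negbTE (ruling_triple_neq0 uL)) orbF.
  by move/eqP.
by move: (congr1 (dot (xi u)) h); rewrite w0 !dotZr ruling_unit ?inner_domain // mul0r mulr1.
Qed.

Lemma curve_separation (delta : R) : 0 < delta -> exists2 rho, 0 < rho & forall s u,
  `|s| <= l / 2 -> `|u| <= l / 2 -> delta <= `|s - u| -> rho <= `|c s - c u|.
Proof.
move=> delta_gt0.
have [|x y|rho rhop sep] := @injective_separated _ _ c (- (l / 2)) (l / 2) delta delta_gt0.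
- move=> x; rewrite in_segment_norm => /inner_domain xr.
  by have := curve_continuous c_smooth xr.
- by rewrite !in_segment_norm; exact: c_inj.
by exists rho => // s u; rewrite -!in_segment_norm; exact: sep.
Qed.

Lemma strips_meet_only_on_curve : exists2 e0, 0 < e0 & forall s u v w,
  `|s| <= l / 2 -> `|u| <= l / 2 -> `|v| < e0 -> `|w| < e0 ->
  c s + v *: xi s = c u + w *: xis (- u) -> v = 0.
Proof.
have [delta delta_gt0 near_diag] := rulings_meet_near_diagonal.
have [rho rho_gt0 far] := curve_separation delta_gt0.
exists (rho / 2) => [|s u v w sL uL v_small w_small meet]; first by rewrite divr_gt0.
have su : s = u.
  apply: (near_diag s u v w sL uL _ meet); rewrite ltNge; apply/negP => /(far s u sL uL).
  apply/negP; rewrite -ltNge (addr_eq_subr meet).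
  apply: le_lt_trans (ler_normB _ _) _; rewrite !normrZ.
  have := ler_piMr (normr_ge0 v) (norm_le1_unit (ruling_unit (inner_domain sL))).
  have := ler_piMr (normr_ge0 w) (norm_le1_unit (inverse_ruling_unit (inner_domain uL))).
  lra.
by move: meet; rewrite su => /addrI; exact: rulings_independent.
Qed.

Lemma strips_intersection : exists2 e0 : R, 0 < e0 & forall eps : R, 0 < eps -> eps < e0 ->
  [set strip c xi p.1 p.2 | p in Omega l eps]
    `&` [set strip (fun s => c (- s)) xis p.1 p.2 | p in Omega l eps]
  = [set c s | s in [set s : R | `|s| <= l / 2]].
Proof.
have [e0 e0_gt0 meet_v0] := strips_meet_only_on_curve.
exists e0 => // eps eps_gt0 eps_lt; apply/seteqP; split.
- move=> _ [[[s v] [/= sL v_eps] <-] [[u w] [/= uL w_eps] meet]].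
  have v0 : v = 0.
    by apply: (meet_v0 s (- u) v w) => //; rewrite ?normrN ?opprK ?(lt_trans _ eps_lt).
  by exists s => //; rewrite /strip v0 scale0r addr0.
- move=> _ [s sL <-]; split.
  + by exists (s, 0); [split; rewrite /= ?normr0 | rewrite /strip scale0r addr0].
  + exists (- s, 0); first by split; rewrite /= ?normrN ?normr0.
    by rewrite /strip /= opprK scale0r addr0.
Qed.

End NormalFormPair.

Unset Implicit Arguments.

Theorem proposition3p4 (R : realType) (l d : R) (c xi xis : R -> 'rV[R]_3)
    (al be als bes : R -> R) :
  0 < l -> 0 < d ->
  (* C: arc-length parametrized, embedded (non-closed), nonvanishing curvature *)
  smooth_on [set s | `|s| < l / 2 + d] c ->
  (forall s, `|s| < l / 2 + d -> dot (tangent c s) (tangent c s) = 1) ->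
  (forall s, `|s| < l / 2 + d -> 0 < curvature c s) ->
  (forall s t, `|s| <= l / 2 -> `|t| <= l / 2 -> c s = c t -> s = t) ->
  (* F = strip c xi is a normal form along c *)
  normal_form l d c xi al be ->
  (* F is admissible: mu_F = kappa cos(alpha_F) < min kappa *)
  (forall s t, `|s| <= l / 2 -> `|t| <= l / 2 ->
     curvature c s * cos (al s) < curvature c t) ->
  (* F_* = strip (c o (-)) xis is the inverse of F *)
  normal_form l d (fun s => c (- s)) xis als bes ->
  (forall s, `|s| < l / 2 + d ->
     (0 < als s) = (0 < al s) /\
     curvature c (- s) * cos (als s) = curvature c s * cos (al s)) ->
  (forall s, `|s| <= l / 2 -> row_free (col_mx (xi s) (xis (- s)))) /\
  (exists2 e0 : R, 0 < e0 & forall eps : R, 0 < eps -> eps < e0 ->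
     [set strip c xi p.1 p.2 | p in Omega l eps]
       `&` [set strip (fun s => c (- s)) xis p.1 p.2 | p in Omega l eps]
     = [set c s | s in [set s : R | `|s| <= l / 2]]).
Proof.
move=> l_gt0 d_gt0 c_smooth c_unit c_curv c_inj F_normal _ Fs_normal inverse.
have als_sign s : `|s| < l / 2 + d -> (0 < als s) = (0 < al s) by move=> sr; case: (inverse s sr).
split=> [s|].
  exact: (rulings_row_free d_gt0 c_smooth c_unit c_curv F_normal Fs_normal als_sign).
exact: (strips_intersection l_gt0 d_gt0 c_smooth c_unit c_curv F_normal Fs_normal als_sign c_inj).
Qed.
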